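(* Let $(\mathbf C,I)$ be a finite-type based chain complex of real inner product spaces, let $M$ be a Morse matching on it, and let $\Phi=\Phi^M:\mathbf C^M\to\mathbf C$, $\Psi=\Psi^M:\mathbf C\to\mathbf C^M$ be the associated Morse retraction. Fix $n$. Then the following two conditions (1) $\mathrm{Proj}_{\operatorname{Ker}\partial_{n+1}^\dagger}(\Phi\Psi s-s)=0$ for all $s\in\mathbf C_n$, and (2) $\mathrm{Proj}_{\operatorname{Ker}\partial_{n-1}}(\Psi^\dagger\Phi^\dagger s-s)=0$ for all $s\in\mathbf C_{n-1}$ hold if and only if $M$ is $(n,n-1)$-free.
   Context: A finite-type based chain complex of real inner product spaces is a chain complex $(\mathbf C,\partial)$ of finite-dimensional real inner product spaces $\mathbf C_n$, $n\ge0$, with pairwise disjoint finite index sets $I=\{I_n\}$ and a direct sum decomposition $\mathbf C_n=\bigoplus_{\alpha\in I_n}C_\alpha$ (summands not necessarily orthogonal); elements of $I_n$ are $n$-cells. $\partial_{\beta,\alpha}=\pi_\beta\circ\partial_n\circ i_\alpha:C_\alpha\to C_\beta$ for $\alpha\in I_n,\beta\in I_{n-1}$ ($i_\alpha$ inclusion, $\pi_\beta$ projection along the other summands). $\dagger$ denotes the adjoint with respect to the inner products (on $\mathbf C^M$ the restricted inner product is used), and $\mathrm{Proj}_W$ is orthogonal projection onto $W$. The graph $\mathcal G(\mathbf C)$ has vertices $\bigcup I_n$ and edges $\alpha\to\beta$ when $\partial_{\beta,\alpha}\neq0$. A Morse matching is a set $M$ of edges with: each vertex on at most one edge of $M$;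 $\partial_{\beta,\alpha}$ an isomorphism for each $\alpha\to\beta\in M$; for each $n$, ''there is a directed path from $\alpha$ to $\beta$ in $\mathcal G(\mathbf C)^M$ (edges of $M$ reversed)'' is a partial order on $I_n$. $M$ is $(n,n-1)$-free if no edge of $M$ joins an $n$-cell to an $(n-1)$-cell. $M^0$ is the set of unmatched cells. For a directed path in $\mathcal G(\mathbf C)^M$ its index is the composite of $\partial_{\sigma_{i+1},\sigma_i}$ for ordinary steps and $-\partial_{\sigma_i,\sigma_{i+1}}^{-1}$ for reversed matched edges (trivial path: identity); $\Gamma_{\beta,\alpha}$ is the sum of indices of all paths from $\alpha$ to $\beta$. Morse complex: $\mathbf C^M_n=\bigoplus_{\alpha\in I_n\cap M^0}C_\alpha$, boundary $x\mapsto\sum_{\beta\in M^0\cap I_{n-1}}\Gamma_{\beta,\alpha}(x)$. Morse retraction: $\Phi^M(x)=\sum_{\beta\in I_n}\Gamma_{\beta,\alpha}(x)$ for $x\in C_\alpha$, $\alpha\in M^0\cap I_n$; $\Psi^M(x)=\sum_{\beta\in M^0\cap I_n}\Gamma_{\beta,\alpha}(x)$ for $x\in C_\alpha$, $\alpha\in I_n$; homotopy $h(x)=\sum_{\beta\in I_{n+1}}\Gamma_{\beta,\alpha}(x)$. *)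

From HB Require Import structures.
From mathcomp Require Import all_boot all_order all_algebra.
From mathcomp Require Import reals.
Set Implicit Arguments. Unset Strict Implicit. Unset Printing Implicit Defensive.
Import Order.TTheory GRing.Theory Num.Theory.
Local Open Scope ring_scope.

(* C_n is modelled as the row-vector space 'rV[R]_(dim n) with the inner    *)
(* product <x,y>_n = x *m gram n *m y^T (gram n symmetric positive definite,*)
(* so an arbitrary inner product).  The n-cells form the finite type        *)
(* cells n (the I_n; different n give disjoint index sets since a cell is a *)
(* pair (n, alpha)).  The direct sum decomposition C_n = (+)_alpha C_alpha  *)
(* (not necessarily orthogonal) is encoded by its family of projections     *)
(* summ n alpha (= i_alpha o pi_alpha, the projection onto C_alpha along the*)
(* other summands): these are idempotents, pairwise orthogonal, summing to  *)
(* the identity, and C_alpha is the image of summ n alpha.                  *)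
(* bd n : 'M_(dim n.+1, dim n) is the boundary d_{n+1} : C_{n+1} -> C_n     *)
(* acting on row vectors (x |-> x *m bd n); d_0 = 0.                        *)

Record fbcc (R : realType) := FBCC {
  dim : nat -> nat;
  gram : forall n, 'M[R]_(dim n);
  cells : nat -> finType;
  summ : forall n, cells n -> 'M[R]_(dim n);
  bd : forall n, 'M[R]_(dim n.+1, dim n)
}.

Definition is_fbcc (R : realType) (C : fbcc R) : Prop :=
  [/\
      (forall n, (gram C n)^T = gram C n),
      (forall n (v : 'rV[R]_(dim C n)), v != 0 -> 0 < (v *m gram C n *m v^T) 0 0),
      (forall n (a b : cells C n),
          summ a *m summ b = if a == b then summ a else 0),
      (forall n, \sum_(a : cells C n) summ a = 1%:M) &
      (forall n, bd C n.+1 *m bd C n = 0)].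

(* the block  d_{beta,alpha} = pi_beta o d_{n+1} o i_alpha, extended by 0 on
   the other summands of C_{n+1}:  alpha an (n+1)-cell, beta an n-cell *)
Definition blk (R : realType) (C : fbcc R) n (a : cells C n.+1) (b : cells C n)
  : 'M[R]_(dim C n.+1, dim C n) := summ a *m bd C n *m summ b.

Definition edge (R : realType) (C : fbcc R) n (a : cells C n.+1) (b : cells C n)
  : bool := blk a b != 0.

(* d_{beta,alpha} : C_alpha -> C_beta is an isomorphism (it has an inverse:
   a map J : C_beta -> C_alpha, i.e. J = pi_alpha J pi_beta on the nose) *)
Definition blk_iso (R : realType) (C : fbcc R) n (a : cells C n.+1) (b : cells C n)
  : Prop :=
  exists J : 'M[R]_(dim C n, dim C n.+1),
    [/\ J = summ b *m J *m summ a,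
        blk a b *m J = summ a &
        J *m blk a b = summ b].

(* the inverse d_{beta,alpha}^{-1} : C_beta -> C_alpha (extended by 0 on the
   other summands of C_n); it is the inverse whenever blk_iso a b holds *)
Definition blk_inv (R : realType) (C : fbcc R) n (a : cells C n.+1) (b : cells C n)
  : 'M[R]_(dim C n, dim C n.+1) :=
  summ b *m pinvmx (blk a b) *m summ a.

Definition matching (R : realType) (C : fbcc R) :=
  forall n, cells C n.+1 -> cells C n -> bool.

Section Paths.
Variables (R : realType) (C : fbcc R) (M : matching C).

Definition ord_edge n (g : cells C n.+1) (b : cells C n) : bool :=
  edge g b && ~~ M g b.

Definition idcell a (al : cells C a) b : cells C b -> 'M[R]_(dim C a, dim C b) :=
  match a =P b with
  | ReflectT h =>
      match h in _ = b' return cells C b' -> 'M[R]_(dim C a, dim C b') with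
      | erefl => fun be => if al == be then summ al else 0
      end
  | ReflectF _ => fun _ => 0
  end.

Definition is_idcell a (al : cells C a) b : cells C b -> bool :=
  match a =P b with
  | ReflectT h =>
      match h in _ = b' return cells C b' -> bool with
      | erefl => fun be => al == be
      end
  | ReflectF _ => fun _ => false
  end.

(* reach k al b be : there is a directed path with exactly k edges in G(C)^M
   from al (an a-cell) to be (a b-cell).  The last edge gamma -> be is either
   an unmatched edge of G(C) (gamma of degree b+1) or a reversed edge of M
   (be -> gamma in M, gamma of degree b-1). *)
Fixpoint reach a (al : cells C a) (k : nat) : forall b, cells C b -> bool :=
  match k with
  | 0 => fun b be => is_idcell al be
  | k'.+1 => fun b be =>
      [exists g : cells C b.+1, ord_edge g be && reach al k' g]
      || (match b return cells C b -> bool with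
          | 0 => fun _ => false
          | b'.+1 => fun be => [exists g : cells C b', M be g && reach al k' g]
          end be)
  end.

(* pathsum k al b be : the sum of the indices of all directed paths with
   exactly k edges in G(C)^M from al to be, as a map C_al -> C_be (extended
   by 0 on the other summands, i.e. precomposed with pi_al).  Index of an
   ordinary step sigma_i -> sigma_{i+1}: d_{sigma_{i+1},sigma_i}; of a
   reversed matched edge: - d_{sigma_i,sigma_{i+1}}^{-1}. Composition is
   written in diagrammatic (row-vector) order. *)
Fixpoint pathsum a (al : cells C a) (k : nat)
  : forall b, cells C b -> 'M[R]_(dim C a, dim C b) :=
  match k with
  | 0 => fun b be => idcell al be
  | k'.+1 => fun b be =>
      \sum_(g : cells C b.+1 | ord_edge g be) pathsum al k' g *m blk g be
      + (match b return cells C b -> 'M[R]_(dim C a, dim C b) with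
         | 0 => fun _ => 0
         | b'.+1 => fun be =>
             \sum_(g : cells C b' | M be g) pathsum al k' g *m (- blk_inv be g)
         end be)
  end.

(* Under the Morse matching hypotheses every path starting at an a-cell stays
   in degrees <= a+1 and G(C)^M is acyclic, so all paths are simple and have
   fewer than  #(cells of degree <= a+1)  edges. Hence Gamma, the sum over all
   paths, is the following finite sum. *)
Definition pbound a : nat := \sum_(j < a.+2) #|cells C j|.

Definition Gamma a (al : cells C a) b (be : cells C b) : 'M[R]_(dim C a, dim C b) :=
  \sum_(k < pbound a) pathsum al k be.

Definition matched n : cells C n -> bool :=
  match n return cells C n -> bool with
  | 0 => fun al => [exists g : cells C 1, M g al]
  | n'.+1 => fun al => [exists g : cells C n'.+2, M g al]
                       || [exists b : cells C n', M al b]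
  end.

Definition critical n (al : cells C n) : bool := ~~ matched al.

Definition is_morse_matching : Prop :=
  (forall n (a : cells C n.+1) (b : cells C n), M a b -> edge a b) /\
  [/\
      (forall n (a : cells C n.+1) (b b' : cells C n), M a b -> M a b' -> b = b'),
      (forall n (a a' : cells C n.+1) (b : cells C n), M a b -> M a' b -> a = a'),
      (forall n (g : cells C n.+2) (a : cells C n.+1) (b : cells C n),
          M g a -> M a b -> False),
      (forall n (a : cells C n.+1) (b : cells C n), M a b -> blk_iso a b) &
      (* reachability in G(C)^M is a partial order on each I_n (reflexivity and
         transitivity are automatic; antisymmetry is the condition) *)
      (forall n (a b : cells C n),
          (exists k, reach a k b) -> (exists k, reach b k a) -> a = b)].

(* C^M_n as a subspace of C_n: the row space of this matrix is the sum of the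
   C_alpha, alpha critical *)
Definition CM n : 'M[R]_(dim C n) := \sum_(al : cells C n | critical al) summ al.

(* Phi is defined on
   C^M_n (it is extended by 0 on the non-critical summands, which is
   irrelevant as it is only applied to, and adjoined on, C^M_n). *)
Definition Phi n : 'M[R]_(dim C n) :=
  \sum_(al : cells C n | critical al) \sum_(be : cells C n) Gamma al be.

Definition Psi n : 'M[R]_(dim C n) :=
  \sum_(al : cells C n) \sum_(be : cells C n | critical be) Gamma al be.

End Paths.

(* adjoint of A : C_m -> C_n (x |-> x *m A) w.r.t. the inner products with
   Gram matrices Gm, Gn:  <x A, y>_n = <x, y A^dag>_m *)
Definition adj (R : realType) m n (Gm : 'M[R]_m) (Gn : 'M[R]_n) (A : 'M[R]_(m, n))
  : 'M[R]_(n, m) := Gn *m A^T *m invmx Gm.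

(* orthogonal projection (w.r.t. Gram matrix G) onto the row space of W,
   acting on row vectors: v |-> v *m oproj G W *)
Definition oproj (R : realType) k n (G : 'M[R]_n) (W : 'M[R]_(k, n)) : 'M[R]_n :=
  let B := row_base W in G *m B^T *m invmx (B *m G *m B^T) *m B.

Section Conditions.
Variables (R : realType) (C : fbcc R) (M : matching C).

(* Phi^dag : C_n -> C^M_n, adjoint of Phi : C^M_n -> C_n where C^M_n carries
   the restricted inner product: the C_n-adjoint followed by the orthogonal
   projection onto C^M_n. *)
Definition Phi_dag n : 'M[R]_(dim C n) :=
  adj (gram C n) (gram C n) (Phi M n) *m oproj (gram C n) (CM M n).

(* Psi^dag : C^M_n -> C_n, adjoint of Psi : C_n -> C^M_n (C^M_n with the
   restricted inner product): the restriction of the C_n-adjoint to C^M_n. *)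
Definition Psi_dag n : 'M[R]_(dim C n) := adj (gram C n) (gram C n) (Psi M n).

(* Ker d_{n+1}^dag  (a subspace of C_n, as a row space) *)
Definition ker_bd_dag n : 'M[R]_(dim C n) :=
  kermx (adj (gram C n.+1) (gram C n) (bd C n)).

(* Ker d_m  (a subspace of C_m);  d_0 = 0 *)
Definition ker_bd m : 'M[R]_(dim C m) :=
  match m return 'M[R]_(dim C m) with
  | 0 => 1%:M
  | m'.+1 => kermx (bd C m')
  end.

Definition cond1 n : Prop :=
  forall s : 'rV[R]_(dim C n),
    (s *m Psi M n *m Phi M n - s) *m oproj (gram C n) (ker_bd_dag n) = 0.

(* condition (2); for n = 0, C_{-1} = 0 and the condition is vacuous *)
Definition cond2 n : Prop :=
  match n with
  | 0 => True
  | m.+1 => forall s : 'rV[R]_(dim C m),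
      (s *m Phi_dag m *m Psi_dag m - s) *m oproj (gram C m) (ker_bd m) = 0
  end.

Definition nfree n : Prop :=
  match n with
  | 0 => True
  | m.+1 => forall (a : cells C m.+1) (b : cells C m), ~~ M a b
  end.

End Conditions.

From HB Require Import structures.
From mathcomp Require Import all_boot all_order all_algebra.
From mathcomp Require Import reals.
From mathcomp Require Import zify.
Set Implicit Arguments. Unset Strict Implicit. Unset Printing Implicit Defensive.
Import Order.TTheory GRing.Theory Num.Theory.
Local Open Scope ring_scope.

(* Matrices act on row vectors, so products read left to right.  Collect the path sums
   Gamma_{beta,alpha} between n-cells into one matrix Gamma_n.  Splitting off the last two
   steps of a path gives Gamma_n (1 - L) = 1, where L = V d + d V + (1 - pi) sums the two-step
   loops, pi projects onto C^M_n, d is the boundary and V runs the matched edges backwards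
   (with the blocks -d_{beta,alpha}^{-1}); the series is finite because G(C)^M is acyclic.
   Hence Phi = pi Gamma, Psi = Gamma pi and Psi Phi = 1 + Gamma V d + d V Gamma.
   If M is (n,n-1)-free, V vanishes on C_{n-1}.  Then Psi Phi - 1 = Gamma V d on C_n has
   image in Im d_{n+1}, the orthogonal complement of Ker d_{n+1}^dag, which is (1); and
   Psi Phi fixes Ker d_{n-1}, which is (2) after taking adjoints.  Conversely (1) forces
   d V Gamma d = 0 on C_n; as the projection pi_D onto the n-cells matched downward satisfies
   pi_D = - pi_D d V Gamma, this gives pi_D d = 0, so every matched block vanishes. *)

Lemma mulmx_trmx_sub0 (R : fieldType) p q k l (y : 'M[R]_(p, q))
    (W : 'M[R]_(k, q)) (U : 'M[R]_(l, q)) :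
  (U <= W)%MS -> y *m W^T = 0 -> y *m U^T = 0.
Proof.
by move=> /mulmxKpV <- yW0; rewrite trmx_mul mulmxA yW0 mul0mx.
Qed.

Lemma sum_rec2_inv (R : ringType) d (G : nat -> 'M[R]_d) (T : 'M[R]_d) N :
  G 0 = 1%:M -> G 1 = 0 -> (forall k, G k.+2 = G k *m T) ->
  (forall k, (N <= k)%N -> G k = 0) ->
  (\sum_(k < N) G k) *m (1%:M - T) = 1%:M.
Proof.
move=> G0 G1 G_rec G_ge.
rewrite mulmxBr mulmx1 mulmx_suml; under [X in _ - X]eq_bigr do rewrite -G_rec.
rewrite -(big_mkord xpredT G) -(big_mkord xpredT (fun k => G k.+2)).
have sumG2 : \sum_(0 <= k < N.+2) G k = 1%:M + \sum_(0 <= k < N) G k.+2.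
  by rewrite big_nat_recl // big_nat_recl // G0 G1 add0r.
have sumGN : \sum_(0 <= k < N.+2) G k = \sum_(0 <= k < N) G k.
  by rewrite !big_nat_recr //= !G_ge // !addr0.
by rewrite -sumGN sumG2 addrK.
Qed.

Lemma inverse_homotopy (R : ringType) d (S Q D Y : 'M[R]_d) :
  S *m (Q - (D + Y)) = 1%:M -> (Q - (D + Y)) *m S = 1%:M ->
  Q *m Y = 0 -> D *m Q = 0 -> D *m Y = 0 -> Y *m D = 0 ->
  S *m Q *m (Q *m S) = 1%:M + S *m Y + D *m S.
Proof.
move=> SV VS QY DQ DY YD.
have SQ : S *m Q = 1%:M + S *m (D + Y) by rewrite -SV mulmxBr subrK.
have QS : Q *m S = 1%:M + (D + Y) *m S by rewrite -VS mulmxBl subrK.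
have YSYY : Y + S *m (Y *m Y) = 0.
  have := congr1 (mulmx^~ Y) SQ; rewrite /= -mulmxA QY mulmx0.
  by rewrite mulmxDl mul1mx -mulmxA mulmxDl DY add0r => <-.
have DY_QS : (D + Y) *m (Q *m S) = Y + Y *m Y *m S.
  rewrite mulmxDl mulmxA DQ mul0mx add0r QS mulmxDr mulmx1 mulmxDl mulmxDr.
  by rewrite !mulmxA YD mul0mx add0r.
have YS_SYYS : Y *m S + S *m (Y *m Y *m S) = 0.
  by rewrite [S *m _]mulmxA -mulmxDl YSYY mul0mx.
rewrite SQ mulmxDl mul1mx -mulmxA DY_QS QS mulmxDr mulmxDl -addrA addrACA YS_SYYS.
by rewrite addr0 [D *m S + _]addrC addrA.
Qed.

Lemma sum_if_eq (V : nmodType) (T : finType) (P : pred T) (F : T -> V) y :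
  \sum_(x | P x) (if x == y then F x else 0) = if P y then F y else 0.
Proof.
rewrite big_mkcond (bigD1 y) //= eqxx big1 ?addr0 // => x /negbTE ->.
by case: (P x).
Qed.

Lemma sum_const_uniq (V : nmodType) (T : finType) (P : pred T) (v : V) :
  (forall x y, P x -> P y -> x = y) -> \sum_(x | P x) v = if [exists x, P x] then v else 0.
Proof.
move=> P_uniq; case: existsP => [[x0 Px0]|noP].
  rewrite (bigD1 x0) //= big1 ?addr0 // => y /andP [Py y_neq].
  by rewrite (P_uniq _ _ Py Px0) eqxx in y_neq.
by rewrite big1 // => x Px; case: noP; exists x.
Qed.

Section InnerProduct.
Variables (R : realType) (d : nat) (G : 'M[R]_d).
Hypothesis G_sym : G^T = G.
Hypothesis G_pos : forall v : 'rV[R]_d, v != 0 -> 0 < (v *m G *m v^T) 0 0.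

Lemma gram_row_free_unit k (B : 'M[R]_(k, d)) :
  row_free B -> B *m G *m B^T \in unitmx.
Proof.
move=> freeB; rewrite -row_free_unit -kermx_eq0; apply/rowV0P => x /sub_kermxP xB0.
apply/eqP/negPn/negP => x0.
have xB_neq0 : x *m B != 0 by rewrite mulmx_free_eq0.
have := G_pos xB_neq0.
have -> : x *m B *m G *m (x *m B)^T = x *m (B *m G *m B^T) *m x^T.
  by rewrite trmx_mul !mulmxA.
by rewrite xB0 mul0mx mxE ltxx.
Qed.

Lemma gram_unit : G \in unitmx.
Proof.
have := @gram_row_free_unit d 1%:M; rewrite trmx1 mulmx1 mul1mx; apply.
by rewrite row_free_unit unitmx1.
Qed.

Lemma oproj_id k (W : 'M[R]_(k, d)) p (x : 'M[R]_(p, d)) :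
  (x <= W)%MS -> x *m oproj G W = x.
Proof.
rewrite /oproj -(eq_row_base W); set B := row_base W => /mulmxKpV xB.
have BGB_unit := gram_row_free_unit (row_base_free W).
rewrite -{1}xB; set y := x *m pinvmx B.
have -> : y *m B *m (G *m B^T *m invmx (B *m G *m B^T) *m B) =
  y *m (B *m G *m B^T) *m invmx (B *m G *m B^T) *m B by rewrite !mulmxA.
by rewrite mulmxK.
Qed.

Lemma oproj_eq0 k (W : 'M[R]_(k, d)) (v : 'rV[R]_d) :
  (v *m oproj G W == 0) = (v *m G *m W^T == 0).
Proof.
rewrite /oproj; set B := row_base W.
have BGB_unit := gram_row_free_unit (row_base_free W).
rewrite mulmxA mulmx_free_eq0 ?row_base_free // mulmxA mulmx_free_eq0; last first.
  by rewrite row_free_unit unitmx_inv.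
by rewrite mulmxA; apply/eqP/eqP => /mulmx_trmx_sub0; apply; rewrite /B eq_row_base.
Qed.

Lemma oproj_adj k (W : 'M[R]_(k, d)) : oproj G W *m G = G *m (oproj G W)^T.
Proof.
rewrite /oproj; move: (row_base W) => B.
have invK_sym : (invmx (B *m G *m B^T))^T = invmx (B *m G *m B^T).
  by rewrite trmx_inv !trmx_mul trmxK G_sym mulmxA.
by rewrite !trmx_mul invK_sym trmxK G_sym !mulmxA.
Qed.

End InnerProduct.

Section Adjoint.
Variables (R : realType) (m n : nat) (Gm : 'M[R]_m) (Gn : 'M[R]_n).
Hypothesis Gm_unit : Gm \in unitmx.

Lemma adj_gram (A : 'M[R]_(m, n)) p q (y : 'M[R]_(p, n)) (x : 'M[R]_(q, m)) :
  y *m adj Gm Gn A *m Gm *m x^T = y *m Gn *m (x *m A)^T.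
Proof. by rewrite /adj !mulmxA mulmxKV // trmx_mul mulmxA. Qed.

Hypothesis Gn_sym : Gn^T = Gn.
Hypothesis Gn_pos : forall v : 'rV[R]_n, v != 0 -> 0 < (v *m Gn *m v^T) 0 0.

Lemma oproj_ker_adj_eq0 (A : 'M[R]_(m, n)) (v : 'rV[R]_n) :
  (v *m oproj Gn (kermx (adj Gm Gn A)) == 0) = (v <= A)%MS.
Proof.
have Gn_unit := gram_unit Gn_pos.
rewrite oproj_eq0 //; apply/eqP/idP => [vK0|].
  pose U := (cokermx A)^T *m invmx Gn.
  have UK : (U <= kermx (adj Gm Gn A))%MS.
    apply/sub_kermxP; rewrite /U /adj !mulmxA mulmxKV //.
    by rewrite -trmx_mul mulmx_coker trmx0 !mul0mx.
  have := mulmx_trmx_sub0 UK vK0.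
  by rewrite /U trmx_mul trmxK trmx_inv Gn_sym mulmxA mulmxK // submxE => ->.
move=> /mulmxKpV <-.
move: (v *m pinvmx A) (kermx _) (mulmx_ker (adj Gm Gn A)) => y K KA0.
have AGK : A *m Gn *m K^T = 0.
  apply: trmx_inj; rewrite trmx0 !trmx_mul trmxK Gn_sym mulmxA.
  by have := adj_gram A K (1%:M : 'M_m); rewrite KA0 !mul0mx mul1mx => <-.
by rewrite -!mulmxA (mulmxA A) AGK mulmx0.
Qed.

End Adjoint.

Section ChainComplex.
Variables (R : realType) (C : fbcc R).
Hypothesis HC : is_fbcc C.

Lemma summ_mul n (a b : cells C n) :
  summ a *m summ b = if a == b then summ a else 0.
Proof. by case: HC => _ _ H _ _; apply: H. Qed.

Lemma summ_idem n (a : cells C n) : summ a *m summ a = summ a.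
Proof. by rewrite summ_mul eqxx. Qed.

Lemma sum_summ n : \sum_(a : cells C n) summ a = 1%:M.
Proof. by case: HC => _ _ _ H _; apply: H. Qed.

Lemma bd_bd n : bd C n.+1 *m bd C n = 0.
Proof. by case: HC => _ _ _ _ H; apply: H. Qed.

Lemma summ_blk n (a a' : cells C n.+1) (b : cells C n) :
  summ a' *m blk a b = if a == a' then blk a b else 0.
Proof.
by rewrite /blk !mulmxA summ_mul eq_sym; case: eqP => [->|_]; rewrite ?mul0mx.
Qed.

Lemma blk_summ n (a : cells C n.+1) (b c : cells C n) :
  blk a b *m summ c = if b == c then blk a b else 0.
Proof. by rewrite /blk -mulmxA summ_mul; case: eqP => // _; rewrite mulmx0. Qed.

Lemma summ_blk_inv n (a : cells C n.+1) (b b' : cells C n) :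
  summ b' *m blk_inv a b = if b == b' then blk_inv a b else 0.
Proof.
by rewrite /blk_inv !mulmxA summ_mul eq_sym; case: eqP => [->|_]; rewrite ?mul0mx.
Qed.

Lemma blk_inv_summ n (a c : cells C n.+1) (b : cells C n) :
  blk_inv a b *m summ c = if a == c then blk_inv a b else 0.
Proof. by rewrite /blk_inv -mulmxA summ_mul; case: eqP => // _; rewrite mulmx0. Qed.

Lemma bd_sum_blk n : bd C n = \sum_(a : cells C n.+1) \sum_(b : cells C n) blk a b.
Proof.
rewrite -[bd C n]mul1mx -[_ *m bd C n]mulmx1 -{1}(sum_summ n.+1) -(sum_summ n).
by rewrite !mulmx_suml; apply: eq_bigr => a _; rewrite mulmx_sumr.
Qed.

Lemma summ_mul_proj n (P : pred (cells C n)) (a : cells C n) :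
  summ a *m \sum_(b | P b) summ b = if P a then summ a else 0.
Proof.
by rewrite mulmx_sumr; under eq_bigr do rewrite summ_mul eq_sym; rewrite sum_if_eq.
Qed.

Lemma proj_mul_proj n (P Q : pred (cells C n)) :
  (\sum_(a | P a) summ a) *m (\sum_(b | Q b) summ b) = \sum_(a | P a && Q a) summ a.
Proof.
by rewrite mulmx_suml; under eq_bigr do rewrite summ_mul_proj; rewrite -big_mkcondr.
Qed.

End ChainComplex.

Section PathMatrices.
Variables (R : realType) (C : fbcc R) (M : matching C).
Hypothesis HC : is_fbcc C.

Definition ord_bd b : 'M[R]_(dim C b.+1, dim C b) :=
  \sum_(a : cells C b.+1) \sum_(c : cells C b | ord_edge M a c) blk a c.

Definition rev_match b : 'M[R]_(dim C b, dim C b.+1) :=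
  \sum_(a : cells C b.+1) \sum_(c : cells C b | M a c) - blk_inv a c.

Definition idmx a b : 'M[R]_(dim C a, dim C b) :=
  match a =P b with
  | ReflectT h => match h in _ = b' return 'M[R]_(dim C a, dim C b') with
                  | erefl => 1%:M end
  | ReflectF _ => 0
  end.

Fixpoint pathmx a k : forall b, 'M[R]_(dim C a, dim C b) :=
  match k with
  | 0 => fun b => idmx a b
  | k'.+1 => fun b => pathmx a k' b.+1 *m ord_bd b +
      match b return 'M[R]_(dim C a, dim C b) with
      | 0 => 0
      | b'.+1 => pathmx a k' b' *m rev_match b'
      end
  end.

Definition matched_up b (be : cells C b) : bool := [exists g : cells C b.+1, M g be].

Definition matched_down b : cells C b -> bool :=
  match b with
  | 0 => fun _ => false
  | b'.+1 => fun be => [exists g : cells C b', M be g]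
  end.

Lemma idmx_id a : idmx a a = 1%:M.
Proof. by rewrite /idmx; case: (a =P a) => // h; rewrite (eq_irrelevance h erefl). Qed.

Lemma idmx_neq a b : a != b -> idmx a b = 0.
Proof. by rewrite /idmx; case: (a =P b). Qed.

Lemma ord_bd_summ b (c : cells C b) :
  ord_bd b *m summ c = \sum_(a | ord_edge M a c) blk a c.
Proof.
rewrite /ord_bd mulmx_suml [RHS]big_mkcond; apply: eq_bigr => a _.
by rewrite mulmx_suml; under eq_bigr do rewrite blk_summ //; rewrite sum_if_eq.
Qed.

Lemma rev_match_summ b (a : cells C b.+1) :
  rev_match b *m summ a = \sum_(c | M a c) - blk_inv a c.
Proof.
rewrite /rev_match mulmx_suml (bigD1 a) //= [X in _ + X]big1 ?addr0 => [|a' a'_neq].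
  by rewrite mulmx_suml; apply: eq_bigr => c _; rewrite mulNmx blk_inv_summ // eqxx.
by rewrite mulmx_suml big1 // => c _; rewrite mulNmx blk_inv_summ // (negbTE a'_neq) oppr0.
Qed.

Lemma summ_rev_match b (c : cells C b) :
  summ c *m rev_match b = \sum_(a | M a c) - blk_inv a c.
Proof.
rewrite /rev_match mulmx_sumr [RHS]big_mkcond; apply: eq_bigr => a _.
rewrite mulmx_sumr; under eq_bigr do rewrite mulmxN summ_blk_inv // (fun_if -%R) oppr0.
by rewrite sum_if_eq.
Qed.

Lemma pathsumE a (al : cells C a) k b (be : cells C b) :
  pathsum M al k be = summ al *m pathmx a k b *m summ be.
Proof.
elim: k b be => [|k IHk] b be /=.
  rewrite /idcell /idmx; case: (a =P b) => [a_eq_b|]; last by rewrite mulmx0 mul0mx.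
  by subst b; rewrite mulmx1 summ_mul.
rewrite mulmxDr mulmxDl; congr (_ + _).
  rewrite mulmxA -[_ *m ord_bd b *m _]mulmxA ord_bd_summ // mulmx_sumr.
  by apply: eq_bigr => g _; rewrite IHk -!mulmxA summ_blk // eqxx !mulmxA.
case: b be => [|b] be /=; first by rewrite mulmx0 mul0mx.
rewrite mulmxA -[_ *m rev_match b *m _]mulmxA rev_match_summ mulmx_sumr.
by apply: eq_bigr => g _; rewrite IHk -!mulmxA mulmxN summ_blk_inv // eqxx mulmxN !mulmxA.
Qed.

End PathMatrices.

Section MorseMatching.
Variables (R : realType) (C : fbcc R) (M : matching C).
Hypothesis HC : is_fbcc C.
Hypothesis HM : is_morse_matching M.

Lemma match_edge n (a : cells C n.+1) (b : cells C n) : M a b -> edge a b.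
Proof. by case: HM => H _; apply: H. Qed.

Lemma match_uniq_low n (a : cells C n.+1) (b b' : cells C n) : M a b -> M a b' -> b = b'.
Proof. by case: HM => _ [H _ _ _ _]; apply: H. Qed.

Lemma match_uniq_high n (a a' : cells C n.+1) (b : cells C n) : M a b -> M a' b -> a = a'.
Proof. by case: HM => _ [_ H _ _ _]; apply: H. Qed.

Lemma match_chain n (g : cells C n.+2) (a : cells C n.+1) (b : cells C n) :
  M g a -> M a b -> False.
Proof. by case: HM => _ [_ _ H _ _]; apply: H. Qed.

Lemma reach_antisym n (a b : cells C n) :
  (exists k, reach M a k b) -> (exists k, reach M b k a) -> a = b.
Proof. by case: HM => _ [_ _ _ _ H]; apply: H. Qed.

Lemma match_blk_inv n (a : cells C n.+1) (b : cells C n) : M a b ->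
  blk a b *m blk_inv a b = summ a /\ blk_inv a b *m blk a b = summ b.
Proof.
move=> Mab; case: HM => _ [_ _ _ iso _]; case: (iso n a b Mab) => J [J_summ BJ JB].
have invB : blk_inv a b *m blk a b = summ b.
  have BPB : blk a b *m pinvmx (blk a b) *m blk a b = blk a b by rewrite mulmxKpV.
  rewrite /blk_inv -mulmxA summ_blk // eqxx -{1}JB.
  move: (pinvmx (blk a b)) BPB JB => P; move: (blk a b) => B BPB JB.
  by rewrite -!mulmxA (mulmxA B) BPB JB.
have inv_eq : blk_inv a b = J.
  have summJ : summ b *m J = J by rewrite J_summ !mulmxA summ_idem.
  by rewrite -summJ -invB -mulmxA BJ blk_inv_summ // eqxx.
by rewrite invB inv_eq BJ.
Qed.

Lemma rev_match_comp b : rev_match M b *m rev_match M b.+1 = 0.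
Proof.
rewrite /rev_match mulmx_suml big1 // => a _; rewrite mulmx_suml big1 // => c Mac.
rewrite mulmx_sumr big1 // => a' _; rewrite mulmx_sumr big1 // => c' Ma'c'.
have -> : blk_inv a' c' = summ c' *m blk_inv a' c' by rewrite summ_blk_inv // eqxx.
rewrite mulNmx mulmxN mulmxA blk_inv_summ //.
case: eqP => [c'_eq|_]; last by rewrite !mul0mx !oppr0.
by subst c'; case: (match_chain Ma'c' Mac).
Qed.

Lemma is_idcell_refl d (c : cells C d) : is_idcell c c.
Proof. by rewrite /is_idcell; case: (d =P d) => // h; rewrite (eq_irrelevance h erefl) /=. Qed.

Lemma pathsum_reach a (al : cells C a) k b (be : cells C b) :
  ~~ reach M al k be -> pathsum M al k be = 0.
Proof.
elim: k b be => [|k IHk] b be /=.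
  by rewrite /is_idcell /idcell; case: (a =P b) => // h; subst b => /=; case: eqP.
rewrite negb_or => /andP [no_ord no_rev].
rewrite big1 ?add0r => [|g g_be]; last first.
  rewrite IHk ?mul0mx //.
  by apply: contra no_ord => al_g; apply/existsP; exists g; rewrite g_be al_g.
case: b be no_ord no_rev => [|b] be //= _ no_rev.
apply: big1 => g be_g; rewrite IHk ?mul0mx //.
by apply: contra no_rev => al_g; apply/existsP; exists g; rewrite be_g al_g.
Qed.

Lemma reach_trans a (al : cells C a) k b (bb : cells C b) l c (cc : cells C c) :
  reach M al k bb -> reach M bb l cc -> reach M al (k + l) cc.
Proof.
move=> al_bb; elim: l c cc => [|l IHl] c cc /=.
  by rewrite /is_idcell addn0; case: (b =P c) => // h; subst c => /= /eqP <-.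
rewrite addnS /=; case/orP => [/existsP [g /andP [g_cc bb_g]]|].
  by apply/orP; left; apply/existsP; exists g; rewrite g_cc IHl.
case: c cc => [|c] cc //= /existsP [g /andP [cc_g bb_g]].
by apply/orP; right; apply/existsP; exists g; rewrite cc_g IHl.
Qed.

Definition reach_by_ord_edge a (al : cells C a) k c (cc : cells C c) : Prop :=
  match a return cells C a -> Prop with
  | 0 => fun _ => False
  | a'.+1 => fun al => exists g : cells C a', ord_edge M al g /\ reach M g k cc
  end al.

Lemma reach_first a (al : cells C a) k c (cc : cells C c) : reach M al k.+1 cc ->
  (exists g : cells C a.+1, M g al /\ reach M g k cc) \/ reach_by_ord_edge al k cc.
Proof.
elim: k c cc => [|k IHk] c cc /=.
  case/orP => [/existsP [g /andP [g_cc]]|].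
    rewrite /is_idcell; case: (a =P c.+1) => // h; subst a => /= /eqP al_g; subst g.
    by right; exists cc; split => //; apply: is_idcell_refl.
  case: c cc => [|c] cc //= /existsP [g /andP [cc_g]].
  rewrite /is_idcell; case: (a =P c) => // h; subst a => /= /eqP al_g; subst g.
  by left; exists cc; split => //; apply: is_idcell_refl.
case/orP => [/existsP [g /andP [g_cc al_g]]|].
  case: (IHk _ _ al_g) => [[f [f_al f_g]]|].
    by left; exists f; split => //=; apply/orP; left; apply/existsP; exists g; rewrite g_cc f_g.
  case: a al {IHk al_g} => [|a] al //= [f [al_f f_g]].
  by right; exists f; split => //=; apply/orP; left; apply/existsP; exists g; rewrite g_cc f_g.
case: c cc => [|c] cc //= /existsP [g /andP [cc_g al_g]].
case: (IHk _ _ al_g) => [[f [f_al f_g]]|].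
  by left; exists f; split => //=; apply/orP; right; apply/existsP; exists g; rewrite cc_g f_g.
case: a al {IHk al_g} => [|a] al //= [f [al_f f_g]].
by right; exists f; split => //=; apply/orP; right; apply/existsP; exists g; rewrite cc_g f_g.
Qed.

Lemma reach_down_or_rev du (u : cells C du) k dw (w : cells C dw) : reach M u k w ->
  du = (dw + k)%N \/ exists d (y : cells C d) (x : cells C d.+1),
    [/\ M x y, exists k1, reach M u k1 y & exists k2, reach M x k2 w].
Proof.
elim: k dw w => [|k IHk] dw w /=.
  by rewrite /is_idcell addn0; case: (du =P dw) => // h _; left.
case/orP => [/existsP [g /andP [g_w u_g]]|].
  case: (IHk _ _ u_g) => [du_eq|[d [y [x [Mxy u_y [k2 x_g]]]]]]; first by left; lia.
  right; exists d, y, x; split => //; exists k2.+1 => /=.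
  by apply/orP; left; apply/existsP; exists g; rewrite g_w x_g.
case: dw w => [|dw] w //= /existsP [g /andP [Mwg u_g]].
by right; exists dw, g, w; split => //; [exists k | exists 0; apply: is_idcell_refl].
Qed.

(* A cycle has to climb a reversed matched edge y -> x; the next step leaves x along an
   ordinary edge x -> z, and then y -> x -> z -> ... -> y forces z = y by antisymmetry. *)
Lemma reach_acyclic d (v : cells C d) k : (0 < k)%N -> ~ reach M v k v.
Proof.
move=> k_gt0 /reach_down_or_rev [|[e [y [x [Mxy [k1 v_y] [k2 x_v]]]]]]; first lia.
have := reach_trans x_v v_y; case: (k2 + k1)%N => [|l].
  by rewrite /= /is_idcell; case: (e.+1 =P e) => // h; lia.
case/reach_first => [[g [Mgx _]]|[z [x_z z_y]]]; first exact: match_chain Mgx Mxy.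
have y_z : reach M y 2 z.
  apply/orP; left; apply/existsP; exists x; rewrite x_z /=.
  by apply/orP; right; apply/existsP; exists y; rewrite Mxy is_idcell_refl.
have z_eq_y : z = y by apply: reach_antisym; [exists l | exists 2%N].
subst z.
by move: x_z; rewrite /ord_edge Mxy andbF.
Qed.

Lemma reach_deg a (al : cells C a) k b (be : cells C b) : reach M al k be ->
  (b <= a)%N || (b == a.+1) && matched_down M be.
Proof.
elim: k b be => [|k IHk] b be /=.
  by rewrite /is_idcell; case: (a =P b) => // h; subst b; rewrite leqnn.
case/orP => [/existsP [g /andP [_ /IHk]]|]; first by case/orP => [|/andP [/eqP]]; lia.
case: b be => [|b] be //= /existsP [g /andP [Mbeg /IHk]].
case/orP => [b_le|/andP [/eqP b_eq]]; last first.
  by subst b => /existsP [g' Mgg']; case: (match_chain Mbeg Mgg').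
rewrite /= eqSS; case: (ltngtP b a) b_le => //= _ _.
by apply/existsP; exists g.
Qed.

Lemma reach_deg_lt a (al : cells C a) k b (be : cells C b) : reach M al k be -> (b < a.+2)%N.
Proof. by move=> /reach_deg /orP [|/andP [/eqP]]; lia. Qed.

Definition low_cell a := {i : 'I_a.+2 & cells C i}.

Lemma card_low_cell a : #|{: low_cell a}| = pbound C a.
Proof. by rewrite card_tagged sumnE big_map big_enum. Qed.

Lemma reach_predecessors a (al : cells C a) l d (g : cells C d) : reach M al l g ->
  exists2 S : {set low_cell a}, #|S| = l &
    forall v, v \in S -> exists2 k, (0 < k)%N & reach M (tagged v) k g.
Proof.
elim: l d g => [|l IHl] d g al_g.
  by exists set0 => [|v]; rewrite ?cards0 ?in_set0.
have [d' [g' [al_g' g'_g]]] : exists d' (g' : cells C d'), reach M al l g' /\ reach M g' 1 g.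
  move: al_g => /orP [/existsP [h /andP [h_g al_h]]|].
    exists d.+1, h; split => //; apply/orP; left; apply/existsP; exists h.
    by rewrite h_g is_idcell_refl.
  case: d g => [|d] g //= /existsP [h /andP [Mgh al_h]].
  exists d, h; split => //; apply/orP; right; apply/existsP; exists h.
  by rewrite Mgh is_idcell_refl.
have [S card_S S_g'] := IHl _ _ al_g'.
pose w : low_cell a := existT _ (Ordinal (reach_deg_lt al_g')) g'.
exists (w |: S) => [|v].
  rewrite cardsU1 card_S; case: (boolP (w \in S)) => // /S_g' [k k_gt0 g'_g'].
  by case: (reach_acyclic k_gt0 g'_g').
rewrite in_setU1 => /orP [/eqP -> | /S_g' [k k_gt0 v_g']]; first by exists 1%N.
by exists (k + 1)%N; [lia | apply: reach_trans v_g' g'_g].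
Qed.

Lemma reach_length_bound a (al : cells C a) k b (be : cells C b) :
  reach M al k be -> (k < pbound C a)%N.
Proof.
move=> al_be; have [S card_S S_be] := reach_predecessors al_be.
pose w : low_cell a := existT _ (Ordinal (reach_deg_lt al_be)) be.
have := max_card (mem (w |: S)); rewrite cardsU1 card_S card_low_cell.
case: (boolP (w \in S)) => [/S_be [k' k'_gt0 be_be]|_]; last by rewrite add1n.
by case: (reach_acyclic k'_gt0 be_be).
Qed.

Lemma pathmx_ge_bound n k : (pbound C n <= k)%N -> pathmx M n k n = 0.
Proof.
move=> k_ge; rewrite -[pathmx M n k n]mul1mx -[_ *m pathmx M n k n]mulmx1.
rewrite -(sum_summ HC n) !mulmx_suml; apply: big1 => al _.
rewrite mulmx_sumr; apply: big1 => be _; rewrite -pathsumE // pathsum_reach //.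
by apply/negP => /reach_length_bound; lia.
Qed.

End MorseMatching.

Section MorseRetraction.
Variables (R : realType) (C : fbcc R) (M : matching C).
Hypothesis HC : is_fbcc C.
Hypothesis HM : is_morse_matching M.

Definition match_bd b : 'M[R]_(dim C b.+1, dim C b) :=
  \sum_(a : cells C b.+1) \sum_(c : cells C b | M a c) blk a c.

Definition bd_rev n : 'M[R]_(dim C n) :=
  match n with 0 => 0 | m.+1 => bd C m *m rev_match M m end.

Definition loop2 n : 'M[R]_(dim C n) :=
  rev_match M n *m ord_bd M n +
  match n with 0 => 0 | m.+1 => ord_bd M m *m rev_match M m end.

Definition proj_up n : 'M[R]_(dim C n) :=
  \sum_(al : cells C n | matched_up M al) summ al.

Definition proj_down n : 'M[R]_(dim C n) :=
  \sum_(al : cells C n | matched_down M al) summ al.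

Definition Gamma_mx n : 'M[R]_(dim C n) := \sum_(k < pbound C n) pathmx M n k n.

Lemma pathmx_above a k :
  (forall i, pathmx M a k (a + i).+2 = 0) /\ pathmx M a k a.+1 *m rev_match M a.+1 = 0.
Proof.
elim: k => [|k [IH_above IH_rev]] /=.
  by split => [i|]; rewrite idmx_neq ?mul0mx //; apply/eqP; lia.
split => [i|].
  have -> : pathmx M a k (a + i).+3 = 0 by rewrite -addnS IH_above.
  rewrite mul0mx add0r.
  by case: i => [|i]; rewrite ?addn0 ?IH_rev // addnS IH_above mul0mx.
have := IH_above 0; rewrite addn0 => ->.
by rewrite mul0mx add0r -mulmxA rev_match_comp // mulmx0.
Qed.

Lemma pathmx_loop2 n k : pathmx M n k.+2 n = pathmx M n k n *m loop2 n.
Proof.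
rewrite /loop2 [pathmx M n k.+2 n]/=.
have := (pathmx_above n k).1 0; rewrite addn0 /= => ->; rewrite mul0mx add0r.
rewrite mulmxDr !mulmxA; congr (_ + _).
case: n => [|m] /=; first by rewrite mulmx0.
rewrite mulmxDl; case: m => [|m] /=; first by rewrite mul0mx addr0 mulmxA.
by rewrite -[_ *m rev_match M m *m _]mulmxA rev_match_comp // mulmx0 addr0 mulmxA.
Qed.

Lemma Gamma_mx_loop2 n : Gamma_mx n *m (1%:M - loop2 n) = 1%:M.
Proof.
apply: (sum_rec2_inv (G := fun k => pathmx M n k n)) => [||k|k]; first exact: idmx_id.
- rewrite /= idmx_neq ?mul0mx ?add0r; last by apply/eqP; lia.
  by case: n => [|m] //=; rewrite idmx_neq ?mul0mx //; apply/eqP; lia.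
- exact: pathmx_loop2.
- exact: pathmx_ge_bound.
Qed.

Lemma criticalE n (al : cells C n) :
  critical M al = ~~ matched_up M al && ~~ matched_down M al.
Proof. by case: n al => [|n] al; rewrite /critical /= ?andbT // negb_or. Qed.

Lemma matched_up_down n (al : cells C n) : matched_up M al -> matched_down M al -> False.
Proof.
case: n al => [//|n] al /existsP [g Mgal] /existsP [b Malb].
exact: match_chain Mgal Malb.
Qed.

Lemma CM_proj_up_down n : CM M n + proj_up n + proj_down n = 1%:M.
Proof.
rewrite -(sum_summ HC n) /CM /proj_up /proj_down big_mkcond.
rewrite [X in _ + X + _]big_mkcond [X in _ + X]big_mkcond -!big_split /=.
apply: eq_bigr => al _; rewrite criticalE.
case: (boolP (matched_up M al)) => [up|_]; case: (boolP (matched_down M al)) => [down|_].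
- by case: (matched_up_down up down).
- by rewrite add0r addr0.
- by rewrite !add0r.
- by rewrite !addr0.
Qed.

Lemma ord_bdE b : ord_bd M b = bd C b - match_bd b.
Proof.
rewrite (bd_sum_blk HC) /ord_bd /match_bd -sumrB; apply: eq_bigr => a _.
rewrite [in RHS](bigID (M a)) /= [X in X - _]addrC addrK big_mkcond [RHS]big_mkcond.
apply: eq_bigr => c _; rewrite /ord_edge /edge.
by case: (M a c); rewrite ?andbF ?andbT //=; case: eqP.
Qed.

Lemma summ_match_bd b (a : cells C b.+1) :
  summ a *m match_bd b = \sum_(c | M a c) blk a c.
Proof.
rewrite /match_bd mulmx_sumr (bigD1 a) //= [X in _ + X]big1 ?addr0 => [|a' a'_neq].
  by rewrite mulmx_sumr; apply: eq_bigr => c _; rewrite summ_blk // eqxx.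
by rewrite mulmx_sumr big1 // => c _; rewrite summ_blk // (negbTE a'_neq).
Qed.

Lemma match_bd_rev m : match_bd m *m rev_match M m = - proj_down m.+1.
Proof.
rewrite /match_bd /proj_down mulmx_suml [in RHS]big_mkcond -sumrN.
apply: eq_bigr => a _; rewrite mulmx_suml.
under eq_bigr => c Mac.
  have -> : blk a c = blk a c *m summ c by rewrite blk_summ // eqxx.
  rewrite -mulmxA summ_rev_match // mulmx_sumr.
  rewrite (big_pred1 a) => [|a']; last first.
    by apply/idP/eqP => [Ma'c|->]; [exact: (match_uniq_high HM Ma'c Mac)|].
  rewrite mulmxN (match_blk_inv HC HM Mac).1.
over.
rewrite sum_const_uniq => [|c c' Mac Mac']; last exact: (match_uniq_low HM Mac Mac').
by rewrite /=; case: ifP; rewrite ?oppr0.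
Qed.

Lemma rev_match_bd n : rev_match M n *m match_bd n = - proj_up n.
Proof.
rewrite /rev_match /proj_up mulmx_suml.
under eq_bigr => a _.
  rewrite mulmx_suml; under eq_bigr => c Mac.
    have -> : blk_inv a c = blk_inv a c *m summ a by rewrite blk_inv_summ // eqxx.
    rewrite mulNmx -mulmxA summ_match_bd mulmx_sumr (big_pred1 c) => [|c']; last first.
      by apply/idP/eqP => [Mac'|->]; [exact: (match_uniq_low HM Mac' Mac)|].
    rewrite (match_blk_inv HC HM Mac).2.
  over.
  rewrite big_mkcond.
over.
rewrite exchange_big [in RHS]big_mkcond -sumrN /=; apply: eq_bigr => c _.
rewrite -big_mkcond sum_const_uniq => [|a a' Mac Ma'c]; last first.
  exact: (match_uniq_high HM Mac Ma'c).
by rewrite /matched_up; case: ifP; rewrite ?oppr0.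
Qed.

Lemma loop2E n : loop2 n = bd_rev n + rev_match M n *m bd C n + (1%:M - CM M n).
Proof.
have -> : 1%:M - CM M n = proj_up n + proj_down n.
  by rewrite -(CM_proj_up_down n) -[CM M n + _ + _]addrA [LHS]addrC addKr.
rewrite /loop2 ord_bdE mulmxBr rev_match_bd opprK.
case: n => [|m] /=; first by rewrite /proj_down big_pred0 // !addr0 add0r.
rewrite ord_bdE mulmxBl match_bd_rev opprK.
by rewrite addrACA [X in _ = X + _]addrC.
Qed.

Definition Gamma_inv n : 'M[R]_(dim C n) := CM M n - (bd_rev n + rev_match M n *m bd C n).

Lemma Gamma_mxV n : Gamma_mx n *m Gamma_inv n = 1%:M.
Proof.
have := Gamma_mx_loop2 n; rewrite loop2E /Gamma_inv.
by rewrite opprD opprB addrCA [1%:M + _]addrC subrK addrC.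
Qed.

Lemma Gamma_Vmx n : Gamma_inv n *m Gamma_mx n = 1%:M.
Proof. exact: mulmx1C (Gamma_mxV n). Qed.

Lemma GammaE n (al be : cells C n) : Gamma M al be = summ al *m Gamma_mx n *m summ be.
Proof.
rewrite /Gamma /Gamma_mx mulmx_sumr mulmx_suml; apply: eq_bigr => k _.
exact: pathsumE.
Qed.

Lemma PhiE n : Phi M n = CM M n *m Gamma_mx n.
Proof.
rewrite /Phi /CM mulmx_suml; apply: eq_bigr => al _.
by under eq_bigr do rewrite GammaE; rewrite -mulmx_sumr (sum_summ HC) mulmx1.
Qed.

Lemma PsiE n : Psi M n = Gamma_mx n *m CM M n.
Proof.
rewrite /Psi /CM -[Gamma_mx n]mul1mx -(sum_summ HC n) !mulmx_suml.
by apply: eq_bigr => al _; under eq_bigr do rewrite GammaE; rewrite -mulmx_sumr.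
Qed.

Lemma summ_rev_match0 b (c : cells C b) : ~~ matched_up M c -> summ c *m rev_match M b = 0.
Proof.
move=> /existsPn not_up; rewrite summ_rev_match // big_pred0 // => a.
exact: negbTE (not_up a).
Qed.

Lemma rev_match_summ0 b (a : cells C b.+1) :
  ~~ matched_down M a -> rev_match M b *m summ a = 0.
Proof.
move=> /existsPn not_down; rewrite rev_match_summ // big_pred0 // => c.
exact: negbTE (not_down c).
Qed.

Lemma CM_rev_match n : CM M n *m rev_match M n = 0.
Proof.
rewrite /CM mulmx_suml big1 // => al; rewrite criticalE => /andP [not_up _].
exact: summ_rev_match0.
Qed.

Lemma rev_match_CM m : rev_match M m *m CM M m.+1 = 0.
Proof.
rewrite /CM mulmx_sumr big1 // => al; rewrite criticalE => /andP [_ not_down].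
exact: rev_match_summ0.
Qed.

Lemma proj_down_rev_match n : proj_down n *m rev_match M n = 0.
Proof.
rewrite /proj_down mulmx_suml big1 // => al down; apply: summ_rev_match0.
by apply/negP => up; case: (matched_up_down up down).
Qed.

Lemma proj_down_CM n : proj_down n *m CM M n = 0.
Proof.
rewrite /proj_down /CM proj_mul_proj // big_pred0 // => al.
by rewrite criticalE; case: (matched_down M al); rewrite ?andbF.
Qed.

Lemma bd_rev_CM n : bd_rev n *m CM M n = 0.
Proof. by case: n => [|m] /=; rewrite ?mul0mx // -mulmxA rev_match_CM mulmx0. Qed.

Lemma bd_rev_rev_match n : bd_rev n *m rev_match M n = 0.
Proof. by case: n => [|m] /=; rewrite ?mul0mx // -mulmxA rev_match_comp // mulmx0. Qed.

Lemma bd_bd_rev n : bd C n *m bd_rev n = 0.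
Proof. by case: n => [|m] /=; rewrite ?mulmx0 // mulmxA (bd_bd HC) mul0mx. Qed.

Lemma PsiPhiE n :
  Psi M n *m Phi M n = 1%:M + Gamma_mx n *m (rev_match M n *m bd C n) + bd_rev n *m Gamma_mx n.
Proof.
rewrite PsiE PhiE; apply: inverse_homotopy; rewrite ?Gamma_mxV ?Gamma_Vmx //.
- by rewrite mulmxA CM_rev_match mul0mx.
- exact: bd_rev_CM.
- by rewrite mulmxA bd_rev_rev_match mul0mx.
- by rewrite -mulmxA bd_bd_rev mulmx0.
Qed.

Lemma PsiPhi_subE n p (s : 'M[R]_(p, dim C n)) :
  s *m Psi M n *m Phi M n - s =
  s *m Gamma_mx n *m rev_match M n *m bd C n + s *m bd_rev n *m Gamma_mx n.
Proof.
by rewrite -mulmxA PsiPhiE !mulmxDr mulmx1 addrAC [s + _ - s]addrAC subrr add0r !mulmxA.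
Qed.

Lemma proj_down_fix n : proj_down n = - (proj_down n *m bd_rev n *m Gamma_mx n).
Proof.
have PD_Y0 : proj_down n *m (rev_match M n *m bd C n) = 0.
  by rewrite mulmxA proj_down_rev_match mul0mx.
rewrite -{1}[proj_down n]mulmx1 -(Gamma_Vmx n) /Gamma_inv mulmxA mulmxBr.
by rewrite proj_down_CM mulmxDr PD_Y0 addr0 sub0r mulNmx.
Qed.

Lemma summ_proj_down m (a : cells C m.+1) (b : cells C m) :
  M a b -> summ a *m proj_down m.+1 = summ a.
Proof. by move=> Mab; rewrite summ_mul_proj // ifT //; apply/existsP; exists b. Qed.

Lemma rev_match_free m : nfree M m.+1 -> rev_match M m = 0.
Proof.
move=> free; rewrite /rev_match big1 // => a _; rewrite big1 // => c Mac.
by have := free a c; rewrite Mac.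
Qed.

Lemma bd_rev_free n : nfree M n -> bd_rev n = 0.
Proof. by case: n => [|m] // free; rewrite /= rev_match_free ?mulmx0. Qed.

Lemma ker_bd_rev m p (U : 'M[R]_(p, dim C m)) : (U <= ker_bd C m)%MS -> U *m bd_rev m = 0.
Proof.
case: m U => [|m] U /=; first by rewrite mulmx0.
by move/sub_kermxP; rewrite mulmxA => ->; rewrite mul0mx.
Qed.

Lemma cond1_nfree n : cond1 M n -> nfree M n.
Proof.
case: n => [//|m] cond1 a b; apply/negP => Mab; have [G_sym G_pos _ _ _] := HC.
have bd_rev_Gamma_bd : bd_rev m.+1 *m (Gamma_mx m.+1 *m bd C m) = 0.
  apply/eqP/mulmxP => s; rewrite mulmx0.
  have /eqP := cond1 s.
  rewrite (oproj_ker_adj_eq0 (gram_unit (G_pos _)) (G_sym _) (G_pos _)) => /submxP [y s_im].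
  have : (s *m Psi M m.+1 *m Phi M m.+1 - s) *m bd C m = 0.
    by rewrite s_im -mulmxA (bd_bd HC) mulmx0.
  rewrite PsiPhi_subE mulmxDl -[_ *m bd C m.+1 *m bd C m]mulmxA (bd_bd HC) mulmx0.
  by rewrite add0r => <-; rewrite !mulmxA.
have proj_down_bd : proj_down m.+1 *m bd C m = 0.
  rewrite {1}proj_down_fix mulNmx -[_ *m Gamma_mx _ *m bd C m]mulmxA.
  by rewrite -(mulmxA (proj_down _)) bd_rev_Gamma_bd mulmx0 oppr0.
have blk0 : blk a b = 0.
  by rewrite /blk -(summ_proj_down Mab) -(mulmxA (summ a)) proj_down_bd mulmx0 mul0mx.
by have := match_edge HM Mab; rewrite /edge blk0 eqxx.
Qed.

Lemma nfree_cond1 n : nfree M n -> cond1 M n.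
Proof.
move=> free s; have [G_sym G_pos _ _ _] := HC; apply/eqP.
rewrite (oproj_ker_adj_eq0 (gram_unit (G_pos _)) (G_sym _) (G_pos _)).
by rewrite PsiPhi_subE bd_rev_free // mulmx0 mul0mx addr0 submxMl.
Qed.

Lemma nfree_cond2 n : nfree M n -> cond2 M n.
Proof.
case: n => [//|m] free s; have [G_sym G_pos _ _ _] := HC.
set G := gram C m; set W := ker_bd C m; set P := oproj G (CM M m).
have G_unit : G \in unitmx := gram_unit (G_pos m).
have W_PsiPhi : W *m Psi M m *m Phi M m = W.
  apply/eqP; rewrite -subr_eq0 PsiPhi_subE (rev_match_free free) mulmx0 mul0mx add0r.
  by rewrite ker_bd_rev ?mul0mx.
have W_PsiP : W *m Psi M m *m P = W *m Psi M m.
  by rewrite /P (oproj_id (G_pos m)) // PsiE mulmxA submxMl.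
(* For w in Ker d: <s Phi^dag Psi^dag, w> = <s, w Psi P Phi> = <s, w Psi Phi> = <s, w>. *)
apply/eqP; rewrite (oproj_eq0 (G_pos m)) /Phi_dag /Psi_dag -/G -/P !mulmxBl adj_gram //.
rewrite mulmxA -(mulmxA _ P) oproj_adj // mulmxA -(mulmxA _ P^T) -trmx_mul W_PsiP.
by rewrite adj_gram // W_PsiPhi subrr.
Qed.

End MorseRetraction.

Theorem mainTheorem2 (R : realType) (C : fbcc R) (M : matching C) (n : nat) :
  is_fbcc C -> is_morse_matching M ->
  (cond1 M n /\ cond2 M n) <-> nfree M n.
Proof.
move=> HC HM; split => [[cond1 _]|free]; first exact: cond1_nfree cond1.
by split; [apply: nfree_cond1 | apply: nfree_cond2].
Qed.
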